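(* Let $Q$ be a QNP and $P=T_D(Q)$. A policy $\pi$ for $P$ is $P$-terminating if and only if the procedure Sieve reduces the policy graph $\mathcal{G}(P,\pi)$ to an acyclic graph.
   Context: A QNP is a tuple $Q=\langle F,V,I,O,G\rangle$ with finite sets $F$ of propositional variables and $V$ of numerical (non-negative real) variables; $I$, $G$ are sets of literals $p,\neg p$ ($p\in F$), $X=0$, $X>0$ ($X\in V$); each action $a\in O$ has a precondition (set of such literals), propositional effects (set of $F$-literals), and numerical effects $N(a)$ consisting of atoms $Inc(X)$, $Dec(X)$ (at most one per variable), with $X>0$ in the precondition whenever $Dec(X)\in N(a)$. The direct translation $T_D(Q)$ is the FOND problem over $F\cup\{p_{X=0}:X\in V\}$ obtained by reading $X=0$ as $p_{X=0}$ and $X>0$ as $\neg p_{X=0}$ in $I$, $G$, and preconditions, keeping propositional effects, replacing $Inc(X)$ by the deterministic effect $\neg p_{X=0}$ and $Dec(X)$ by the nondeterministic effect $\neg p_{X=0}\mid p_{X=0}$; it has a unique initial state (atoms not in $I$ are false). For a state $\bar s$ and action $a$ applicable in it, $F(a,\bar s)$ is the set of possible successors. A policy $\pi$ for $P$ is a partial map from states to actions; a $\pi$-trajectory is a sequence $\bar s_0,\bar s_1,\dots$ from the initial state with $\pi(\bar s_i)$ applicable and $\bar s_{i+1}\in F(\pi(\bar s_i),\bar s_i)$. An action of $P$ is a $Dec(X)$ (resp. $Inc(X)$) action if it comes from an action of $Q$ with $Dec(X)$ (resp. $Inc(X)$) in its numerical effects. An infinite $\pi$-trajectory is terminating if there is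 $X\in V$ such that $\pi(\bar s)$ is a $Dec(X)$ action for some state $\bar s$ occurring infinitely often in it and $\pi(\bar s')$ is not an $Inc(X)$ action for any state $\bar s'$ occurring infinitely often in it; $\pi$ is $P$-terminating iff every infinite $\pi$-trajectory is terminating. The policy graph $\mathcal{G}(P,\pi)$ has as nodes the states of $P$ reachable from the initial state by $\pi$-trajectories, and edges $(\bar s,\bar s')$ for $\bar s'\in F(\pi(\bar s),\bar s)$, labeled by $\pi(\bar s)$. The procedure Sieve on a graph $\mathcal G$ repeats: compute the strongly connected components (SCCs) of $\mathcal G$; choose an SCC $C$ and a variable $X\in V$ such that $\pi(\bar s)$ is a $Dec(X)$ action for some $\bar s\in C$ and $\pi(\bar s)$ is an $Inc(X)$ action for no $\bar s\in C$; remove all edges $(\bar s,\bar s')$ with $\bar s,\bar s'\in C$ and $\pi(\bar s)$ a $Dec(X)$ action; until $\mathcal G$ is acyclic or no such $C,X$ exist. *)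

From Stdlib Require Import Relations List.
From HB Require Import structures.
From mathcomp Require Import all_boot.
Set Implicit Arguments. Unset Strict Implicit. Unset Printing Implicit Defensive.

Section QNP.
Variables (F V A : finType).
(* F : propositional variables, V : numerical variables, A : actions (= O) *)

Inductive qlit := LPos of F | LNeg of F | LZero of V | LGt of V.

Inductive numeff := Inc | Dec.

(* A QNP <F,V,I,O,G> with O = A.  Numerical effects are a partial map
   V -> {Inc, Dec} ("at most one atom per variable"). *)
Record qnp := QNP {
  q_init : seq qlit;
  q_goal : seq qlit;
  q_pre  : A -> seq qlit;
  q_peff : A -> seq (F * bool);          (* (p,true) = p, (p,false) = ~p *)
  q_neff : A -> V -> option numeff
}.

Definition wf_qnp (Q : qnp) : Prop :=
  forall a X, q_neff Q a X = Some Dec -> List.In (LGt X) (q_pre Q a).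

(* A state of T_D(Q): truth values of the atoms p in F and of p_{X=0}. *)
Definition state := ({ffun F -> bool} * {ffun V -> bool})%type.

Definition holds (s : state) (l : qlit) : Prop :=
  match l with
  | LPos p => s.1 p = true
  | LNeg p => s.1 p = false
  | LZero X => s.2 X = true
  | LGt X => s.2 X = false
  end.

Variable Q : qnp.

(* unique initial state: atoms not in I are false *)
Definition init_state : state :=
  ([ffun p => has (fun l => if l is LPos q then q == p else false) (q_init Q)],
   [ffun X => has (fun l => if l is LZero Y then Y == X else false) (q_init Q)]).

Definition applicable (a : A) (s : state) : Prop :=
  forall l, List.In l (q_pre Q a) -> holds s l.

Definition succ (a : A) (s s' : state) : Prop :=
  (forall p, List.In (p, true) (q_peff Q a) -> s'.1 p = true) /\
  (forall p, List.In (p, false) (q_peff Q a) -> s'.1 p = false) /\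
  (forall p, ~ List.In (p, true) (q_peff Q a) -> ~ List.In (p, false) (q_peff Q a) ->
             s'.1 p = s.1 p) /\
  (forall X, match q_neff Q a X with
             | None => s'.2 X = s.2 X
             | Some Inc => s'.2 X = false
             | Some Dec => True
             end).

Definition policy := state -> option A.

Variable pi : policy.

Definition pstep (s s' : state) : Prop :=
  exists a, pi s = Some a /\ applicable a s /\ succ a s s'.

Definition inf_traj (tr : nat -> state) : Prop :=
  tr 0 = init_state /\ forall n, pstep (tr n) (tr n.+1).

Definition occurs_inf (tr : nat -> state) (s : state) : Prop :=
  forall n, exists m, n <= m /\ tr m = s.

Definition is_dec (X : V) (s : state) : Prop :=
  exists a, pi s = Some a /\ q_neff Q a X = Some Dec.
Definition is_inc (X : V) (s : state) : Prop :=
  exists a, pi s = Some a /\ q_neff Q a X = Some Inc.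

Definition terminating_traj (tr : nat -> state) : Prop :=
  exists X, (exists s, occurs_inf tr s /\ is_dec X s) /\
            (forall s, occurs_inf tr s -> ~ is_inc X s).

Definition P_terminating : Prop :=
  forall tr, inf_traj tr -> terminating_traj tr.

Definition reachable (s : state) : Prop :=
  clos_refl_trans state pstep init_state s.

(* a graph on the node set {reachable states} is given by its edge relation *)
Definition graph := state -> state -> Prop.

Definition policy_graph : graph := fun s s' => reachable s /\ pstep s s'.

Definition acyclic (E : graph) : Prop :=
  forall x y, E x y -> ~ clos_refl_trans state E y x.

Definition scc (E : graph) (C : state -> Prop) : Prop :=
  exists x, reachable x /\
    forall y, C y <-> (reachable y /\ clos_refl_trans state E x y /\
                       clos_refl_trans state E y x).

(* C contains a cycle (has an internal edge) *)
Definition nontrivial (E : graph) (C : state -> Prop) : Prop :=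
  exists x y, C x /\ C y /\ E x y.

Definition sieve_choice (E : graph) (C : state -> Prop) (X : V) : Prop :=
  scc E C /\ nontrivial E C /\
  (exists s, C s /\ is_dec X s) /\ (forall s, C s -> ~ is_inc X s).

Definition sieve_remove (E : graph) (C : state -> Prop) (X : V) : graph :=
  fun x y => E x y /\ ~ (C x /\ C y /\ is_dec X x).

Definition sieve_step (E E' : graph) : Prop :=
  ~ acyclic E /\ exists C X, sieve_choice E C X /\ E' = sieve_remove E C X.

Definition sieve_final (E : graph) : Prop :=
  acyclic E \/ ~ (exists C X, sieve_choice E C X).

Definition sieve_result (E : graph) : Prop :=
  clos_refl_trans graph sieve_step policy_graph E /\ sieve_final E.

End QNP.

From Stdlib Require Import Relations.
From mathcomp Require Import all_boot boolp.
Set Implicit Arguments. Unset Strict Implicit. Unset Printing Implicit Defensive.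

(* The states a pi-trajectory visits infinitely often, linked by the steps it
   takes infinitely often, form a strongly connected subgraph of G(P, pi); and
   conversely any strongly connected set of reachable states is exactly the
   recurrent set of a lasso-shaped trajectory touring it forever.
   If pi is terminating and a final graph of Sieve still has a cycle, the lasso
   through the SCC C of that cycle is terminating, and its witness X makes
   (C, X) a legal Sieve choice: so the final graph is acyclic.
   If pi is not terminating, Sieve never removes a recurrent step of a
   non-terminating trajectory (an SCC containing one recurrent state contains
   all of them, hence an Inc(X) whenever it has a Dec(X)), so these steps
   remain as a cycle in every outcome.  Sieve always has an outcome since each
   step deletes an edge of a finite graph. *)

Local Arguments inclusion {A} R1 R2.
Local Arguments clos_refl_trans {A} R _ _.
Local Arguments rt_step {A R x y} _.
Local Arguments rt_trans {A R x y z} _ _.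
Local Arguments rt_refl {A R x}.

Section Walks.
Variables (T : Type) (R : relation T).

Fixpoint walk (x : T) (l : seq T) : Prop :=
  if l is y :: l' then R x y /\ walk y l' else True.

Lemma walk_cat x l1 l2 : walk x (l1 ++ l2) <-> walk x l1 /\ walk (last x l1) l2.
Proof. by elim: l1 x => [|y l IH] x /=; [tauto | rewrite IH; tauto]. Qed.

Lemma walk_nth x0 x l i : walk x l -> i < size l ->
  R (nth x0 (x :: l) i) (nth x0 (x :: l) i.+1).
Proof. by elim: l x i => [|y l IH] x [|i] //= [Rxy wl]; last exact: IH. Qed.

Lemma crt_walk x y : clos_refl_trans R x y -> exists2 l, walk x l & last x l = y.
Proof.
move/clos_rt_rt1n_iff; elim=> [|{}x z {}y Rxz _ [l wl <-]]; first by exists [::].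
by exists (z :: l).
Qed.

Lemma walk_crt x l : walk x l -> clos_refl_trans R x (last x l).
Proof.
elim: l x => [|y l IH] x /=; first by move=> _; exact: rt_refl.
by case=> Rxy /IH; apply: rt_trans (rt_step Rxy).
Qed.

Lemma crt_first_step x y z : clos_refl_trans R x y -> R y z ->
  exists2 u, R x u & clos_refl_trans R u z.
Proof.
move/clos_rt_rt1n_iff; elim=> [{}x Rxz | {}x u {}y Rxu uy _ Ryz].
  by exists z => //; exact: rt_refl.
by exists u => //; apply: rt_trans (rt_step Ryz); apply/clos_rt_rt1n_iff.
Qed.

End Walks.

Lemma sub_walk T (R R' : relation T) : inclusion R R' ->
  forall x l, walk R x l -> walk R' x l.
Proof. by move=> sub x l; elim: l x => [|y l IH] x //= [/sub Rxy /IH]. Qed.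

Lemma sub_crt T (R R' : relation T) : inclusion R R' ->
  inclusion (clos_refl_trans R) (clos_refl_trans R').
Proof.
move=> sub x y; elim=> [{}x {}y /sub/rt_step // | {}x | {}x u {}y _ xu _ uy].
  exact: rt_refl.
exact: rt_trans xu uy.
Qed.

Lemma walk_mem_crt (T : eqType) (R : relation T) x l z : walk R x l -> z \in l ->
  clos_refl_trans R x z /\ clos_refl_trans R z (last x l).
Proof.
elim: l x => [|y l IH] x //= [Rxy wl]; rewrite inE => /orP[/eqP-> | /(IH _ wl)[yz zl]].
  by split; [exact: rt_step | exact: walk_crt].
by split=> //; exact: rt_trans (rt_step Rxy) yz.
Qed.

Section ClosedWalks.
Variables (T : eqType) (R : relation T).

Definition closed_walk x c := [/\ walk R x c, last x c = x & 0 < size c].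

Lemma closed_walk_mem x c z : closed_walk x c -> z \in x :: c ->
  clos_refl_trans R x z /\ clos_refl_trans R z x.
Proof.
case=> wc lc _; rewrite inE => /orP[/eqP-> | /(walk_mem_crt wc)]; last by rewrite lc.
by split; exact: rt_refl.
Qed.

Lemma closed_walk_extend x c a : closed_walk x c ->
    clos_refl_trans R x a -> clos_refl_trans R a x ->
  exists c', [/\ closed_walk x c', a \in x :: c' & {subset x :: c <= x :: c'}].
Proof.
case=> wc lc c_gt0 xa ax.
have [q1 wq1 lq1] := crt_walk xa; have [q2 wq2 lq2] := crt_walk ax.
exists (c ++ q1 ++ q2); split.
- split; last by rewrite size_cat addn_gt0 c_gt0.
    by apply/walk_cat; rewrite lc; split=> //; apply/walk_cat; rewrite lq1.
  by rewrite !last_cat lc lq1 lq2.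
- by have := mem_last x q1; rewrite lq1 !inE !mem_cat => /orP[->|->]; rewrite ?orbT.
- by move=> z; rewrite !inE !mem_cat => /orP[->|->]; rewrite ?orbT.
Qed.

Lemma closed_walk_cover x c0 (l : seq T) : closed_walk x c0 ->
    {in l, forall z, clos_refl_trans R x z /\ clos_refl_trans R z x} ->
  exists2 c, closed_walk x c & {subset l <= x :: c}.
Proof.
move=> cw0; elim: l => [|a l IH] sccl; first by exists c0.
have [|c cw lc] := IH; first by move=> z zl; apply: sccl; rewrite inE zl orbT.
have [xa ax] := sccl a (mem_head _ _).
have [c' [cw' ac' sub]] := closed_walk_extend cw xa ax.
by exists c' => // z; rewrite inE => /orP[/eqP-> // | /lc/sub].
Qed.

End ClosedWalks.

(* At type [state F V] this is [occurs_inf]. *)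
Definition inf_often (T : Type) (u : nat -> T) (x : T) : Prop :=
  forall n, exists m, n <= m /\ u m = x.

Definition inf_step (T : Type) (u : nat -> T) (x y : T) : Prop :=
  forall n, exists m, [/\ n <= m, u m = x & u m.+1 = y].

Section Lasso.
Variables (T : eqType) (R : relation T) (x0 x : T) (p c : seq T).
Hypotheses (wp : walk R x0 p) (lp : last x0 p = x) (cw : closed_walk R x c).

Definition lasso (n : nat) : T :=
  if n <= size p then nth x0 (x0 :: p) n
  else nth x (x :: c) ((n - size p) %% size c).

Lemma lasso0 : lasso 0 = x0.
Proof. by rewrite /lasso leq0n. Qed.

Lemma lasso_cycle n : size p <= n -> lasso n = nth x (x :: c) ((n - size p) %% size c).
Proof.
rewrite /lasso leq_eqVlt => /orP[/eqP<- | lt_n]; last by rewrite leqNgt lt_n.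
by rewrite leqnn subnn mod0n /= -lp (last_nth x0).
Qed.

Lemma closed_walk_nth j : j < size c ->
  R (nth x (x :: c) j) (nth x (x :: c) (j.+1 %% size c)).
Proof.
case: cw => wc lc _ lt_j; have Rj := walk_nth x wc lt_j.
case: (ltnP j.+1 (size c)) => [lt_j1 | ge_j1]; first by rewrite modn_small.
have Ej : j.+1 = size c by apply/eqP; rewrite eqn_leq lt_j ge_j1.
by rewrite Ej modnn; rewrite Ej -(last_nth x) lc in Rj.
Qed.

Lemma lasso_step n : R (lasso n) (lasso n.+1).
Proof.
case: (ltnP n (size p)) => [lt_n | ge_n].
  by rewrite /lasso (ltnW lt_n) lt_n; exact: walk_nth.
case: cw => _ _ c_gt0.
rewrite !lasso_cycle ?(leqW ge_n) // subSn // -addn1 -modnDml addn1.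
exact/closed_walk_nth/ltn_pmod.
Qed.

Lemma lasso_inf_often s : inf_often lasso s <-> s \in x :: c.
Proof.
case: cw => _ lc c_gt0; split.
  case/(_ (size p)) => n [ge_n <-]; rewrite lasso_cycle //.
  by apply: mem_nth; rewrite ltnS ltnW // ltn_pmod.
move=> s_c n; have [j lt_j <-] : exists2 j, j < size c & nth x (x :: c) j = s.
  case: (ltnP (index s (x :: c)) (size c)) => [lt_i | ge_i].
    by exists (index s (x :: c)); rewrite ?nth_index.
  have Ei : index s (x :: c) = size c.
    by apply/eqP; rewrite eqn_leq ge_i andbT -ltnS index_mem.
  by exists 0 => //; rewrite -(nth_index x s_c) Ei -(last_nth x) lc.
exists (size p + (n * size c + j)); split.
  by rewrite addnCA (leq_trans (leq_pmulr n c_gt0)) ?leq_addr.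
by rewrite lasso_cycle ?leq_addr // addKn modnMDl modn_small.
Qed.

End Lasso.

Lemma finite_eventually (T : finType) (P : T -> nat -> Prop) :
  (forall x n m, n <= m -> P x n -> P x m) -> (forall x, exists n, P x n) ->
  exists n, forall x, P x n.
Proof.
move=> mono /choice[f Pf]; exists (\max_x f x) => x.
exact: mono (leq_bigmax x) (Pf x).
Qed.

Section Recurrence.
Variables (T : finType) (u : nat -> T).

Lemma eventually_inf_step : exists N, forall m, N <= m -> inf_step u (u m) (u m.+1).
Proof.
pose P (e : T * T) n := inf_step u e.1 e.2 \/ forall m, n <= m -> (u m, u m.+1) <> e.
have [e n m le_nm [inf | fin] | e | N PN] := @finite_eventually _ P.
- by left.
- by right=> k le_mk; apply: fin (leq_trans le_nm le_mk).
- have [inf | /existsNP[n fin]] := pselect (inf_step u e.1 e.2); first by exists 0; left.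
  by exists n; right=> m le_nm Em; apply: fin; exists m; rewrite -Em.
- by exists N => m le_Nm; case: (PN (u m, u m.+1)) => // /(_ m le_Nm).
Qed.

Lemma inf_step_inf_often x y : inf_step u x y -> inf_often u x /\ inf_often u y.
Proof.
move=> xy; split=> n; have [m [le_nm um um1]] := xy n.
  by exists m.
by exists m.+1; rewrite ltnW.
Qed.

Lemma inf_often_connected x y : inf_often u x -> inf_often u y ->
  clos_refl_trans (inf_step u) x y.
Proof.
have [N uN] := eventually_inf_step.
have walkN m k : N <= m -> clos_refl_trans (inf_step u) (u m) (u (m + k)).
  elim: k => [|k IH] le_Nm; first by rewrite addn0; exact: rt_refl.
  rewrite addnS; apply: rt_trans (IH le_Nm) (rt_step (uN _ _)).
  exact: leq_trans le_Nm (leq_addr k m).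
move=> /(_ N)[m [le_Nm <-]] /(_ m)[m' [le_mm' <-]].
by rewrite -(subnKC le_mm'); exact: walkN.
Qed.

End Recurrence.

Section Sieve.
Variables (F V A : finType) (Q : qnp F V A) (pi : policy F V A).
Local Notation st := (state F V).
Local Notation reach := (reachable Q pi).
Local Notation G := (policy_graph Q pi).
Local Notation sieve_steps := (clos_refl_trans (sieve_step Q pi)).

Lemma reachable_step x y : reach x -> pstep Q pi x y -> reach y.
Proof. by move=> rx /rt_step; apply: rt_trans rx. Qed.

Lemma reachable_crt (E : graph F V) x y : inclusion E G ->
  reach x -> clos_refl_trans E x y -> reach y.
Proof.
move=> EG rx /(sub_crt (R' := pstep Q pi)) xy; apply: rt_trans rx (xy _).
by move=> u v /EG[].
Qed.

Lemma traj_reachable tr : inf_traj Q pi tr -> forall n, reach (tr n).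
Proof.
case=> tr0 trS; elim=> [|n IH]; first by rewrite tr0; exact: rt_refl.
exact: reachable_step IH (trS n).
Qed.

Lemma sieve_steps_sub E1 E2 : sieve_steps E1 E2 -> inclusion E2 E1.
Proof.
by elim=> [{}E1 {}E2 [_ [C [X [_ ->]]]] x y [] | {}E1 x y
          | {}E1 E E3 _ sub1 _ sub x y /sub/sub1].
Qed.

Definition scc_of (E : graph F V) (x : st) : st -> Prop :=
  fun y => reach y /\ clos_refl_trans E x y /\ clos_refl_trans E y x.

Lemma scc_of_traj E x y : inclusion E G -> E x y -> clos_refl_trans E y x ->
  exists tr, inf_traj Q pi tr /\ forall s, occurs_inf tr s <-> scc_of E x s.
Proof.
move=> EG Exy Eyx; have [rx _] := EG _ _ Exy.
have [q wq lq] := crt_walk Eyx.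
have cw0 : closed_walk E x (y :: q) by [].
pose l := [seq z <- enum (predT : {pred st}) | `[< scc_of E x z >]].
have [c cw cover] : exists2 c, closed_walk E x c & {subset l <= x :: c}.
  apply: closed_walk_cover cw0 _ => z.
  by rewrite mem_filter => /andP[/asboolP[_ sccz] _].
have [p wp lp] := crt_walk rx.
have cwP : closed_walk (pstep Q pi) x c.
  by case: cw => wc lc c_gt0; split=> //; apply: sub_walk wc => u v /EG[].
exists (lasso (init_state Q) x p c).
split; first by split; [exact: lasso0 | exact: lasso_step].
move=> s; apply: iff_trans (lasso_inf_often lp cwP s) _; split=> [s_c | scc_s].
  have [xs sx] := closed_walk_mem cw s_c.
  by split=> //; exact: reachable_crt rx xs.
by apply: cover; rewrite mem_filter mem_enum andbT; exact/asboolP.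
Qed.

Lemma terminating_scc_choice E x y : P_terminating Q pi -> inclusion E G ->
  E x y -> clos_refl_trans E y x -> exists X, sieve_choice Q pi E (scc_of E x) X.
Proof.
move=> term EG Exy Eyx; have [rx pxy] := EG _ _ Exy.
have [tr [trP inf_scc]] := scc_of_traj EG Exy Eyx.
have [X [[s [inf_s dec_s]] no_inc]] := term tr trP.
exists X; split; first by exists x.
split; last by split; [exists s; rewrite -inf_scc | move=> t /inf_scc /no_inc].
exists x, y; split; first by split; last by split; exact: rt_refl.
by split=> //; split; [exact: reachable_step pxy | split; first exact: rt_step].
Qed.

Lemma terminating_sieve_result_acyclic E :
  P_terminating Q pi -> sieve_result Q pi E -> acyclic E.
Proof.
move=> term [steps [//|no_choice]] x y Exy Eyx; apply: no_choice.
have [X choice] := terminating_scc_choice term (sieve_steps_sub steps) Exy Eyx.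
by exists (scc_of E x), X.
Qed.

Lemma inf_step_policy_graph tr : inf_traj Q pi tr -> inclusion (inf_step tr) G.
Proof.
move=> trP s s' /(_ 0)[m [_ <- <-]].
by split; [exact: traj_reachable | exact: trP.2].
Qed.

Lemma inf_step_sieve_step tr E1 E2 : inf_traj Q pi tr -> ~ terminating_traj Q pi tr ->
  sieve_step Q pi E1 E2 -> inclusion (inf_step tr) E1 -> inclusion (inf_step tr) E2.
Proof.
move=> trP nterm [_ [C [X [[[r [_ Cr]] [_ [_ no_inc]]] ->]]]] sub1 s s' ss'.
split; first exact: sub1.
case=> Cs [_ dec_s]; apply: nterm; have [inf_s _] := inf_step_inf_often ss'.
exists X; split; first by exists s.
move=> t inf_t; apply: no_inc; apply/Cr; have [_ [rs sr]] := (Cr s).1 Cs.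
split; first by have [m [_ <-]] := inf_t 0; exact: traj_reachable.
split; first exact: rt_trans rs (sub_crt sub1 (inf_often_connected inf_s inf_t)).
exact: rt_trans (sub_crt sub1 (inf_often_connected inf_t inf_s)) sr.
Qed.

Lemma inf_step_sieve_steps tr E1 E2 : inf_traj Q pi tr -> ~ terminating_traj Q pi tr ->
  sieve_steps E1 E2 -> inclusion (inf_step tr) E1 -> inclusion (inf_step tr) E2.
Proof.
move=> trP nterm; elim=> [{}E1 {}E2 | // | {}E1 E E3 _ sub1 _ sub /sub1/sub //].
exact: inf_step_sieve_step.
Qed.

Lemma acyclic_sieve_result_terminating E :
  sieve_result Q pi E -> acyclic E -> P_terminating Q pi.
Proof.
move=> [steps _] acyc tr trP; apply: contrapT => nterm.
have sub := inf_step_sieve_steps trP nterm steps (inf_step_policy_graph trP).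
have [N uN] := eventually_inf_step tr; have stepN := uN N (leqnn N).
have [inf_N inf_N1] := inf_step_inf_often stepN.
exact: acyc _ _ (sub _ _ stepN) (sub_crt sub (inf_often_connected inf_N1 inf_N)).
Qed.

Definition edge_set (E : graph F V) : {pred st * st} := [pred e | `[< E e.1 e.2 >]].

Lemma scc_out_step E C s : inclusion E G -> scc Q pi E C -> nontrivial E C -> C s ->
  exists2 z, C z & E s z.
Proof.
move=> EG [r [_ Cr]] [a [b [Ca [Cb Eab]]]] Cs.
have [rs [rs' sr]] := (Cr s).1 Cs; have [_ [ra _]] := (Cr a).1 Ca.
have [_ [_ br]] := (Cr b).1 Cb.
have [z Esz zb] := crt_first_step (rt_trans sr ra) Eab.
exists z => //; apply/Cr; split; first exact: reachable_step rs (EG _ _ Esz).2.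
by split; [exact: rt_trans rs' (rt_step Esz) | exact: rt_trans zb br].
Qed.

Lemma sieve_remove_proper E C X : inclusion E G -> sieve_choice Q pi E C X ->
  edge_set (sieve_remove Q pi E C X) \proper edge_set E.
Proof.
move=> EG [sccC [nontriv [[s [Cs dec_s]] _]]]; apply/properP; split.
  by apply/subsetP=> e; rewrite !inE => /asboolP[Ee _]; exact/asboolP.
have [z Cz Esz] := scc_out_step EG sccC nontriv Cs.
by exists (s, z); rewrite !inE; [exact/asboolP | apply/asboolP=> -[_]; apply].
Qed.

Lemma sieve_result_exists : exists E, sieve_result Q pi E.
Proof.
suff: forall n E, #|edge_set E| < n -> sieve_steps G E ->
    exists E', sieve_result Q pi E'.
  by apply; [exact: ltnSn | exact: rt_refl].
elim=> // n IH E lt_En steps.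
have [final | not_final] := pselect (sieve_final Q pi E); first by exists E.
have [C [X choice]] : exists C X, sieve_choice Q pi E C X.
  by apply: contrapT => no_choice; apply: not_final; right.
have lt_rem := proper_card (sieve_remove_proper (sieve_steps_sub steps) choice).
apply: (IH (sieve_remove Q pi E C X)); first by apply: leq_trans lt_rem _; rewrite -ltnS.
apply: rt_trans steps (rt_step _); split; last by exists C, X.
by move=> acyc; apply: not_final; left.
Qed.

End Sieve.

Theorem theorem6 (F V A : finType) (Q : qnp F V A) (pi : policy F V A) :
  wf_qnp Q ->
  (P_terminating Q pi <-> (forall E, sieve_result Q pi E -> acyclic E)) /\
  (P_terminating Q pi <-> (exists E, sieve_result Q pi E /\ acyclic E)).
Proof.
move=> _; have [E0 result0] := sieve_result_exists Q pi.
split; split.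
- by move=> term E; apply: terminating_sieve_result_acyclic.
- by move=> acyc; exact: acyclic_sieve_result_terminating result0 (acyc _ result0).
- by move=> term; exists E0; split; last exact: terminating_sieve_result_acyclic term result0.
- by case=> E [result acyc]; exact: acyclic_sieve_result_terminating result acyc.
Qed.
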